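(* Every PCMC model exhibits uniform expansion. Precisely: let $U_1=\{1,\dots,n\}$ carry a PCMC rate family $(q_{mm'})_{m\ne m'}$, and for $k\ge 1$ let $U_k=\{(m,j):1\le m\le n,\ 1\le j\le k\}$ carry a PCMC rate family $(q^{(k)}_{xy})_{x\neq y}$ such that $q^{(k)}_{(m,j),(m',j')}=q_{mm'}$ whenever $m\neq m'$, and $q^{(k)}_{(m,j),(m,j')}=q^{(k)}_{(m,j'),(m,j)}$ for $j\neq j'$ (so the $k$ elements $(m,1),\dots,(m,k)$ are copies of one another). Then for every $m\in\{1,\dots,n\}$, \[p_{m,U_1}=\sum_{j=1}^k p_{(m,j),U_k},\] where $p_{m,U_1}$ and $p_{(m,j),U_k}$ are the PCMC choice probabilities in the respective models.
   Context: Pairwise Choice Markov Chain (PCMC) model: on a finite set $U$ of alternatives, the parameters are off-diagonal rates $q_{ij}\ge 0$ ($i\neq j\in U$) subject to $q_{ij}+q_{ji}\ge 1$ for all distinct $i,j$. $Q_U$ is the $U\times U$ matrix with these off-diagonal entries and diagonal entries $q_{ii}=-\sum_{j\neq i} q_{ij}$; $\pi_U$ is the unique probability vector with $\pi_U^TQ_U=0$, and the choice probability of $i$ from $U$ is $p_{iU}=\pi_U(i)$. Two elements $i,j$ of a set $S$ are copies if $q_{ik}=q_{jk}$ for all $k\in S\setminus\{i,j\}$ and $q_{ij}=q_{ji}$. Uniform expansion is the property that the probability of choosing some copy of an item from a set containing $k$ copies of each of $n$ items equals the probability of choosing that item from the set with one copy of each. *)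

From HB Require Import structures.
From mathcomp Require Import all_boot all_order all_algebra.
Set Implicit Arguments. Unset Strict Implicit. Unset Printing Implicit Defensive.
Import Order.TTheory GRing.Theory Num.Theory.
Local Open Scope ring_scope.

Definition pcmc_rates (R : realFieldType) (T : finType) (q : T -> T -> R) : Prop :=
  forall i j : T, i != j -> 0 <= q i j /\ 1 <= q i j + q j i.

Definition Qmat (R : realFieldType) (T : finType) (q : T -> T -> R) (i j : T) : R :=
  if i == j then - \sum_(l | l != i) q i l else q i j.

Definition pcmc_stationary (R : realFieldType) (T : finType)
    (q : T -> T -> R) (pi : T -> R) : Prop :=
  (forall i, 0 <= pi i) /\ \sum_i pi i = 1 /\
  (forall j, \sum_i pi i * Qmat q i j = 0).

(* Summing the stationary equations of the copy model over the [k] copies of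
   each column, the copy structure of the rates turns [pi_k Q_k = 0] into
   [k (sigma Q_1) = 0] for the lumped vector [sigma m = sum_j pi_k (m, j)], so
   [sigma] is stationary for [Q_1].  The PCMC condition [q i j + q j i >= 1]
   makes the stationary vector of [Q_1] unique, hence [pi_1 = sigma]. *)

From mathcomp Require Import all_boot all_order all_algebra.
Import Order.TTheory GRing.Theory Num.Theory.
Local Open Scope ring_scope.

Section RateMatrix.

Context {R : realFieldType} {T : finType} (q : T -> T -> R).

Lemma Qmat_offdiag i j : i != j -> Qmat q i j = q i j.
Proof. by rewrite /Qmat => /negbTE ->. Qed.

Lemma Qmat_row_sum0 i : \sum_j Qmat q i j = 0.
Proof.
rewrite (bigD1 i) //= {1}/Qmat eqxx addrC; apply/eqP; rewrite subr_eq0.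
by apply/eqP/eq_bigr => j; rewrite eq_sym => /Qmat_offdiag.
Qed.

Lemma Qmat_row_sum_in (S : {set T}) i :
  \sum_(j in S) Qmat q i j =
    if i \in S then - \sum_(j in ~: S) q i j else \sum_(j in S) q i j.
Proof.
case: ifPn => iS; last first.
  by apply: eq_bigr => j jS; apply: Qmat_offdiag; apply: contraNneq iS => ->.
have := Qmat_row_sum0 i; rewrite (bigID [in S]) /= => /eqP.
rewrite addr_eq0 => /eqP ->.
congr (- _); apply: eq_big => [j | j]; first by rewrite in_setC.
by move=> jS; apply: Qmat_offdiag; apply: contraNneq jS => <-.
Qed.

Lemma Qmat_cut_balance {x : T -> R} (S : {set T}) :
  (forall j, \sum_i x i * Qmat q i j = 0) ->
  \sum_(i in S) x i * \sum_(j in ~: S) q i j =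
  \sum_(i in ~: S) x i * \sum_(j in S) q i j.
Proof.
move=> xQ; have : \sum_i x i * \sum_(j in S) Qmat q i j = 0.
  under eq_bigr do rewrite mulr_sumr.
  by rewrite exchange_big big1 // => j _; apply: xQ.
have out_E : \sum_(i in S) x i * \sum_(j in S) Qmat q i j =
    - \sum_(i in S) x i * \sum_(j in ~: S) q i j.
  by rewrite -sumrN; apply: eq_bigr => i iS; rewrite Qmat_row_sum_in iS mulrN.
have in_E : \sum_(i | i \notin S) x i * \sum_(j in S) Qmat q i j =
    \sum_(i in ~: S) x i * \sum_(j in S) q i j.
  apply: eq_big => [i | i iS]; first by rewrite in_setC.
  by rewrite Qmat_row_sum_in (negbTE iS).
by rewrite (bigID [in S]) /= out_E in_E addrC => /eqP; rewrite subr_eq0 => /eqP.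
Qed.

Hypothesis rates : pcmc_rates q.

Lemma pcmc_rate_ge0 i j : i != j -> 0 <= q i j.
Proof. by case/rates. Qed.

(* With [S] the support of the positive part of [x], the cut balance forces no
   rate out of [S]; since every pair is linked in at least one direction, every
   state outside [S] then has positive rate into [S], so [x] vanishes there. *)
Lemma pcmc_kernel_le0 {x : T -> R} :
  (forall j, \sum_i x i * Qmat q i j = 0) -> \sum_i x i = 0 ->
  forall i, x i <= 0.
Proof.
move=> xQ x0 s; rewrite leNgt; apply/negP => xs_gt0.
pose S := [set i | 0 < x i].
have sS : s \in S by rewrite inE.
have rate_out_ge0 (A : {set T}) i : i \in A -> 0 <= \sum_(j in ~: A) q i j.
  move=> iA; apply: sumr_ge0 => j; rewrite in_setC => jA.
  by apply: pcmc_rate_ge0; apply: contraNneq jA => <-.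
have out_ge0 i : i \in S -> 0 <= x i * \sum_(j in ~: S) q i j.
  by move=> iS; rewrite mulr_ge0 ?rate_out_ge0 // ltW //; rewrite inE in iS.
have in_le0 i : i \in ~: S -> 0 <= - (x i * \sum_(j in S) q i j).
  rewrite -mulNr in_setC inE -leNgt -oppr_ge0 => xi_le0.
  rewrite mulr_ge0 // -(setCK S) rate_out_ge0 //.
  by rewrite in_setC inE -leNgt -oppr_ge0.
have out0 : \sum_(i in S) x i * \sum_(j in ~: S) q i j = 0.
  apply/eqP; rewrite eq_le sumr_ge0 // andbT (Qmat_cut_balance S xQ).
  by rewrite -oppr_ge0 -sumrN sumr_ge0.
have qs0 i : i \in ~: S -> q s i = 0.
  apply: (psumr_eq0P (P := [in ~: S])) => [j jS|].
    by apply: pcmc_rate_ge0; apply: contraTneq jS => <-; rewrite in_setC sS.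
  move: (psumr_eq0P out_ge0 out0 sS) => /eqP.
  by rewrite mulf_eq0 gt_eqF //= => /eqP.
have x0_out i : i \in ~: S -> x i = 0.
  move=> iS; have i_neq_s : i != s.
    by apply: contraTneq iS => ->; rewrite in_setC sS.
  have in_gt0 : 0 < \sum_(j in S) q i j.
    have [_] := rates _ _ i_neq_s; rewrite qs0 // addr0 => qis_ge1.
    rewrite (bigD1 s) //= (lt_le_trans ltr01) // (le_trans qis_ge1) // lerDl.
    apply: sumr_ge0 => j /andP[jS _]; apply: pcmc_rate_ge0.
    by apply: contraTneq jS => <-; rewrite -in_setC.
  have in0 : \sum_(i in ~: S) - (x i * \sum_(j in S) q i j) = 0.
    by rewrite sumrN -(Qmat_cut_balance S xQ) out0 oppr0.
  move: (psumr_eq0P in_le0 in0 iS) => /eqP.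
  by rewrite oppr_eq0 mulf_eq0 (gt_eqF in_gt0) orbF => /eqP.
have x_ge0 i : 0 <= x i.
  case: (boolP (i \in S)) => [|iS]; first by rewrite inE => /ltW.
  by rewrite x0_out ?in_setC.
by move: xs_gt0; rewrite (psumr_eq0P (fun i _ => x_ge0 i) x0) ?ltxx.
Qed.

Lemma pcmc_stationary_unique {p p' : T -> R} :
  pcmc_stationary q p -> pcmc_stationary q p' -> p =1 p'.
Proof.
move=> [_ [p1 pQ]] [_ [p'1 p'Q]] i.
pose x j := p j - p' j.
have xQ j : \sum_l x l * Qmat q l j = 0.
  by under eq_bigr do rewrite mulrBl; rewrite sumrB pQ p'Q subrr.
have x0 : \sum_l x l = 0 by rewrite sumrB p1 p'1 subrr.
have NxQ j : \sum_l - x l * Qmat q l j = 0.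
  by under eq_bigr do rewrite mulNr; rewrite sumrN xQ oppr0.
have Nx0 : \sum_l - x l = 0 by rewrite sumrN x0 oppr0.
have := pcmc_kernel_le0 NxQ Nx0 i; have := pcmc_kernel_le0 xQ x0 i.
by rewrite /x oppr_le0 => le0 ge0; apply/eqP; rewrite -subr_eq0 eq_le le0 ge0.
Qed.

End RateMatrix.

Section Copies.

Context {R : realFieldType} {T : finType} {k : nat}.
Context {q : T -> T -> R} {qk : T * 'I_k -> T * 'I_k -> R}.
Hypothesis copy_rates :
  forall (a c : T) (j d : 'I_k), a != c -> qk (a, j) (c, d) = q a c.

Lemma Qmat_copies_sum a j c : \sum_d Qmat qk (a, j) (c, d) = k%:R * Qmat q a c.
Proof.
have off_diag c' : c' != a -> \sum_d Qmat qk (a, j) (c', d) = k%:R * q a c'.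
  move=> ca; rewrite mulr_natl -[in RHS](card_ord k) -sumr_const.
  apply: eq_bigr => d _; rewrite Qmat_offdiag ?copy_rates 1?eq_sym //.
  by apply: contraNneq ca => -[->].
have [<-|ca] := eqVneq a c; last by rewrite off_diag 1?eq_sym // Qmat_offdiag.
(* The row of [Q_k] at [(a, j)] sums to zero, so its block at [a] balances the
   [k] identical copies of the other blocks. *)
have : \sum_c' \sum_d Qmat qk (a, j) (c', d) = 0.
  by rewrite pair_bigA -[RHS](Qmat_row_sum0 qk (a, j)); apply: eq_bigr => -[].
rewrite (bigD1 a) //= => /eqP; rewrite addr_eq0 => /eqP ->.
by rewrite (eq_bigr _ off_diag) -mulr_sumr /Qmat eqxx mulrN.
Qed.

Lemma copies_lump_stationary {pik : T * 'I_k -> R} :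
  (0 < k)%N -> pcmc_stationary qk pik ->
  pcmc_stationary q (fun a => \sum_j pik (a, j)).
Proof.
move=> k_gt0 [pik_ge0 [pik1 pikQ]]; split; [|split].
- by move=> a; apply: sumr_ge0 => j _.
- by rewrite pair_bigA -[RHS]pik1; apply: eq_bigr => -[].
move=> c; have k_neq0 : k%:R != 0 :> R by rewrite pnatr_eq0 -lt0n.
apply: (mulfI k_neq0); rewrite mulr0 mulr_sumr.
have lumpE a : k%:R * ((\sum_j pik (a, j)) * Qmat q a c) =
    \sum_j \sum_d pik (a, j) * Qmat qk (a, j) (c, d).
  rewrite mulrCA mulr_suml; apply: eq_bigr => j _.
  by rewrite -(Qmat_copies_sum a j c) mulr_sumr.
under eq_bigr do rewrite lumpE.
rewrite pair_bigA exchange_big big1 // => d _.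
by rewrite -[RHS](pikQ (c, d)); apply: eq_bigr => -[].
Qed.

End Copies.

Theorem proposition4 (R : realFieldType) (n k : nat) (Hk : (0 < k)%N)
    (q : 'I_n -> 'I_n -> R) (qk : ('I_n * 'I_k)%type -> ('I_n * 'I_k)%type -> R)
    (pi1 : 'I_n -> R) (pik : ('I_n * 'I_k)%type -> R) :
  pcmc_rates q ->
  pcmc_rates qk ->
  (forall (m m' : 'I_n) (j j' : 'I_k), m != m' -> qk (m, j) (m', j') = q m m') ->
  (forall (m : 'I_n) (j j' : 'I_k), j != j' -> qk (m, j) (m, j') = qk (m, j') (m, j)) ->
  pcmc_stationary q pi1 ->
  pcmc_stationary qk pik ->
  forall m : 'I_n, pi1 m = \sum_(j < k) pik (m, j).
Proof.
move=> q_rates _ copy_rates _ pi1_stat pik_stat.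
exact: (pcmc_stationary_unique _ q_rates pi1_stat
  (copies_lump_stationary copy_rates Hk pik_stat)).
Qed.
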